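(* Let $r>0$ and let $\mathcal D=\{({\bm{x}}_i,y_i)\}_{i=1}^n$, ${\bm{x}}_i\in\mathbb{R}^d$, $y_i\in[K]$, be a dataset that is $r$-separated with respect to the $\ell_\infty$-norm. Then there exists a two-layer $\ell_\infty$-distance net ${\bm{g}}:\mathbb{R}^d\to\mathbb{R}^K$ with hidden size $n$ such that the margin-based certified $\ell_\infty$ robust accuracy on $\mathcal D$ under perturbation $\epsilon=r$ is $100\%$, i.e. $\mathsf{margin}({\bm{x}}_i,y_i;{\bm{g}})/2>r$ for every $i\in[n]$.
   Context: $r$-separation: $\mathcal D$ is $r$-separated w.r.t. $\ell_\infty$ if for all $i,j$ with $y_i\neq y_j$ one has $\|{\bm{x}}_i-{\bm{x}}_j\|_\infty>2r$. An $L$-layer $\ell_\infty$-distance net ${\bm{g}}$ with input ${\bm{x}}^{(0)}={\bm{x}}$ computes $x^{(l)}_i=\|{\bm{x}}^{(l-1)}-{\bm{w}}^{(l,i)}\|_\infty+b^{(l)}_i$ ($l\in[L]$, $i\in[n_l]$, arbitrary real parameters), with $n_L=K$ and ${\bm{g}}({\bm{x}})={\bm{x}}^{(L)}$; ''hidden size'' is the width $n_l$ of the hidden layers $l<L$. The output margin is $\mathsf{margin}({\bm{x}},y;{\bm{g}})=[{\bm{g}}({\bm{x}})]_y-\max_{j\neq y}[{\bm{g}}({\bm{x}})]_j$. Margin-based certification declares the labeled point $({\bm{x}},y)$ certifiably robust at level $\epsilon$ iff $\mathsf{margin}({\bm{x}},y;{\bm{g}})/2>\epsilon$. *)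

From HB Require Import structures.
From mathcomp Require Import all_boot all_order all_algebra.
From mathcomp Require Import reals constructive_ereal.
Set Implicit Arguments. Unset Strict Implicit. Unset Printing Implicit Defensive.
Import Order.TTheory GRing.Theory Num.Theory.
Local Open Scope ring_scope.

Definition linf (R : realType) (d : nat) (v : 'I_d -> R) : R :=
  \big[Num.max/0]_(i < d) `|v i|.

Definition vsub (R : realType) (d : nat) (u v : 'I_d -> R) : 'I_d -> R :=
  fun i => u i - v i.

Definition r_separated (R : realType) (d n K : nat)
    (x : 'I_n -> ('I_d -> R)) (y : 'I_n -> 'I_K) (r : R) : Prop :=
  forall i j : 'I_n, y i != y j -> 2 * r < linf (vsub (x i) (x j)).

Definition dist_layer (R : realType) (m p : nat)
    (w : 'I_p -> ('I_m -> R)) (b : 'I_p -> R) (u : 'I_m -> R) : 'I_p -> R :=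
  fun k => linf (vsub u (w k)) + b k.

Definition two_layer_net (R : realType) (d h K : nat)
    (w1 : 'I_h -> ('I_d -> R)) (b1 : 'I_h -> R)
    (w2 : 'I_K -> ('I_h -> R)) (b2 : 'I_K -> R) (u : 'I_d -> R) : 'I_K -> R :=
  dist_layer w2 b2 (dist_layer w1 b1 u).

(* margin(x,y;g) = g(x)_y - max_{j <> y} g(x)_j, in the extended reals
   (the max over an empty set of classes is -oo). *)
Definition margin (R : realType) (d K : nat) (g : ('I_d -> R) -> 'I_K -> R)
    (u : 'I_d -> R) (c : 'I_K) : \bar R :=
  ((g u c)%:E - \big[maxe/-oo%E]_(j < K | j != c) (g u j)%:E)%E.

From HB Require Import structures.
From mathcomp Require Import all_boot all_order all_algebra.
From mathcomp Require Import reals constructive_ereal.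
From mathcomp Require Import lra.
Set Implicit Arguments. Unset Strict Implicit. Unset Printing Implicit Defensive.
Import Order.TTheory GRing.Theory Num.Theory.
Local Open Scope ring_scope.

(* Use the data points themselves as first-layer centres, so that the hidden
   unit j computes the distance D(u, x_j).  For class c the output is
   max_j |D(u, x_j) - A [y_j = c]| with A larger than every pairwise distance
   plus 2r.  At u = x_i the unit j = i contributes |0 - A| = A to the true
   class, while for any other class c every unit stays below A - 2r: units of
   class c sit at distance in (2r, A), units of other classes at distance
   below A - 2r. *)

Section Linf.
Variables (R : realType) (d : nat).
Implicit Types (u v : 'I_d -> R) (c : R).

Lemma linf_ge0 v : 0 <= linf v.
Proof.
apply: (big_ind (fun z => 0 <= z)) => // a b a0 _.
by rewrite le_max a0.
Qed.

Lemma ler_linf v k : `|v k| <= linf v.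
Proof. exact: le_bigmax. Qed.

Lemma linf_lt v c : 0 < c -> (forall k, `|v k| < c) -> linf v < c.
Proof. by move=> c0 vc; apply: bigmax_lt. Qed.

Lemma linf_vsubvv u : linf (vsub u u) = 0.
Proof.
apply/eqP; rewrite eq_le linf_ge0 andbT.
by apply: bigmax_le => // k _; rewrite /vsub subrr normr0.
Qed.

End Linf.

Lemma lt_margin_half (R : realType) (d K : nat)
    (g : ('I_d -> R) -> 'I_K -> R) (u : 'I_d -> R) (c : 'I_K) (r : R) :
  (forall j, j != c -> g u j < g u c - 2 * r) ->
  (r%:E < margin g u c * (2^-1)%:E)%E.
Proof.
move=> gap.
have : (\big[maxe/-oo%E]_(j < K | j != c) (g u j)%:E < (g u c - 2 * r)%:E)%E.
  by apply: bigmax_lt => [|j jc]; [exact: ltNyr | rewrite lte_fin gap].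
rewrite /margin; case: (\big[maxe/-oo%E]_(j < K | j != c) _) => [m | // | _].
- by rewrite lte_fin => mlt; rewrite -EFinD -EFinM lte_fin; lra.
- have half_gt0 : (0%:E < (2^-1 : R)%:E)%E by rewrite lte_fin invr_gt0 ltr0n.
  by rewrite /= addey // (gt0_mulye half_gt0) ltry.
Qed.

Section InterpolatingNet.
Variables (R : realType) (d n K : nat).
Variables (x : 'I_n -> ('I_d -> R)) (y : 'I_n -> 'I_K) (A : R).

Definition label_weights : 'I_K -> 'I_n -> R :=
  fun c j => if y j == c then A else 0.

Definition interpolating_net : ('I_d -> R) -> 'I_K -> R :=
  two_layer_net x (fun=> 0) label_weights (fun=> 0).

Lemma interpolating_netE u c :
  interpolating_net u c =
  linf (fun j => linf (vsub u (x j)) - label_weights c j).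
Proof.
rewrite /interpolating_net /two_layer_net /dist_layer addr0.
by apply: eq_bigr => j _; rewrite /vsub addr0.
Qed.

Lemma interpolating_net_label_ge i : A <= interpolating_net (x i) (y i).
Proof.
rewrite interpolating_netE; apply: (le_trans _ (ler_linf _ i)).
by rewrite /= linf_vsubvv /label_weights eqxx sub0r normrN ler_norm.
Qed.

Lemma interpolating_net_other_lt (r : R) i c :
  0 <= r -> r_separated x y r -> c != y i ->
  (forall j, linf (vsub (x i) (x j)) < A - 2 * r) ->
  interpolating_net (x i) c < A - 2 * r.
Proof.
move=> r0 sep cyi near_i; rewrite interpolating_netE.
have gap_gt0 : 0 < A - 2 * r by have := near_i i; rewrite linf_vsubvv.
apply: linf_lt => // j; have Dj := near_i j.
have Dj0 := linf_ge0 (vsub (x i) (x j)).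
rewrite /label_weights; case: eqP => [yjc | _].
- have far : 2 * r < linf (vsub (x i) (x j)) by apply: sep; rewrite yjc eq_sym.
  by rewrite ler0_norm; lra.
- by rewrite subr0 ger0_norm.
Qed.

End InterpolatingNet.

Theorem mainTheorem4 (R : realType) (d n K : nat) (r : R)
    (x : 'I_n -> ('I_d -> R)) (y : 'I_n -> 'I_K) :
  0 < r -> r_separated x y r ->
  exists (w1 : 'I_n -> ('I_d -> R)) (b1 : 'I_n -> R)
         (w2 : 'I_K -> ('I_n -> R)) (b2 : 'I_K -> R),
    forall i : 'I_n,
      (r%:E < margin (two_layer_net w1 b1 w2 b2) (x i) (y i) * (2^-1)%:E)%E.
Proof.
move=> /ltW r0 sep.
pose diam := \big[Num.max/0]_(p : 'I_n * 'I_n) linf (vsub (x p.1) (x p.2)).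
pose A := diam + 2 * r + 1.
exists x, (fun=> 0), (label_weights y A), (fun=> 0) => i.
apply: lt_margin_half => c cyi.
have near_i j : linf (vsub (x i) (x j)) < A - 2 * r.
  have := le_bigmax 0 (fun p : 'I_n * 'I_n => linf (vsub (x p.1) (x p.2))) (i, j).
  by rewrite -/diam /A; lra.
apply: (lt_le_trans (interpolating_net_other_lt r0 sep cyi near_i)).
by rewrite lerD2r interpolating_net_label_ge.
Qed.
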